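(* Let $(X,\Sigma)$ be a measurable space and $\boldsymbol{\mu}=(\mu_t)_{t\ge0}$ a family of monotone measures on $\Sigma$ such that $\mu_t$ is continuous from below for every $t>0$. For $t\ge0$ and $E\in\Sigma\setminus\{\emptyset\}$ define $\mathsf{A}_t(f|E)=\sup\{a\in[0,\infty)\colon \{x\in E\colon f(x)<a\}\in\mathcal{N}_{\mu_t}\}$ for $f\in\mathbf{F}$, and $\mathsf{A}_t(\cdot|\emptyset)=\infty$. Then for every $t>0$ and every $f\in\mathbf{F}\setminus\{0_X\}$, $$\sup\{\mu_t(E)\colon \mathsf{A}_t(f|E)\ge t,\ E\in\Sigma\}=\mu_t(\{x\in X\colon f(x)\ge t\}).$$
   Context: $0_X$ is the zero function on $X$. $\mathbf{F}$ denotes the set of all $\Sigma$-measurable, nonnegative, bounded functions $f\colon X\to[0,\infty)$. A monotone measure is a map $\mu\colon\Sigma\to[0,\infty]$ with $\mu(B)\le\mu(C)$ whenever $B\subseteq C$, $\mu(\emptyset)=0$ and $\mu(X)>0$; it is continuous from below if $\mu(\bigcup_n E_n)=\lim_n\mu(E_n)$ for every nondecreasing sequence $E_1\subseteq E_2\subseteq\cdots$ in $\Sigma$. For a monotone measure $\mu$, $\mathcal{N}_\mu$ is the set of null sets: $N\in\mathcal{N}_\mu$ iff $N\in\Sigma$ and $\mu(E\cup N)=\mu(E)$ for every $E\in\Sigma$. Thus $\mathsf{A}_t(f|E)$ is the essential infimum of $f$ on $E$ with respect to $\mu_t$. *)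

From HB Require Import structures.
From mathcomp Require Import all_boot all_order all_algebra.
From mathcomp Require Import all_classical all_reals all_analysis.
Set Implicit Arguments. Unset Strict Implicit. Unset Printing Implicit Defensive.
Import Order.TTheory GRing.Theory Num.Theory.
Local Open Scope classical_set_scope.
Local Open Scope ring_scope.

Definition monotone_measure (d : measure_display) (T : measurableType d)
  (R : realType) (mu : set T -> \bar R) : Prop :=
  [/\ forall B, measurable B -> (0 <= mu B)%E,
      forall B C, measurable B -> measurable C -> B `<=` C -> (mu B <= mu C)%E,
      mu set0 = 0%E &
      (0 < mu setT)%E].

Definition cont_from_below (d : measure_display) (T : measurableType d)
  (R : realType) (mu : set T -> \bar R) : Prop :=
  forall E : nat -> set T, (forall n, measurable (E n)) ->
    nondecreasing_seq E ->
    mu (\bigcup_n E n) = limn (fun n => mu (E n)).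

Definition null_set (d : measure_display) (T : measurableType d)
  (R : realType) (mu : set T -> \bar R) (N : set T) : Prop :=
  measurable N /\ forall E, measurable E -> mu (E `|` N) = mu E.

Definition A_ess (d : measure_display) (T : measurableType d)
  (R : realType) (mu : set T -> \bar R) (f : T -> R) (E : set T) : \bar R :=
  if E == set0 then +oo%E
  else ereal_sup [set (a%:E) | a in
         [set a : R | 0 <= a /\ null_set mu [set x | E x /\ f x < a]]].

(* If t <= A_t(f|E), then every E ∩ {f < t - 1/(n+1)} is mu_t-null; these sets
   increase to E ∩ {f < t}, which is therefore null by continuity from below,
   so mu_t(E) <= mu_t({f >= t} ∪ (E ∩ {f < t})) = mu_t({f >= t}). Conversely
   the superlevel set {f >= t} itself has A_t(f|{f >= t}) >= t. *)

From HB Require Import structures.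
From mathcomp Require Import all_boot all_order all_algebra.
From mathcomp Require Import all_classical all_reals all_analysis.
Import Order.TTheory GRing.Theory Num.Theory.
Local Open Scope classical_set_scope.
Local Open Scope ring_scope.

Section level_sets.
Set Implicit Arguments. Unset Strict Implicit.
Variables (d : measure_display) (X : measurableType d) (R : realType).
Variables (f : X -> R) (mf : measurable_fun setT f).

Lemma measurable_lt_level (a : R) : measurable [set x | f x < a].
Proof.
have -> : [set x | f x < a] = f @^-1` `]-oo, a[.
  by apply/seteqP; split => x /=; rewrite in_itv.
by rewrite -(setTI (f @^-1` _)); exact: mf measurableT _ (measurable_itv _).
Qed.

Lemma measurable_ge_level (a : R) : measurable [set x | a <= f x].
Proof.
have -> : [set x | a <= f x] = f @^-1` `[a, +oo[.
  by apply/seteqP; split => x /=; rewrite in_itv /= andbT.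
by rewrite -(setTI (f @^-1` _)); exact: mf measurableT _ (measurable_itv _).
Qed.

End level_sets.

Section null_sets.
Set Implicit Arguments. Unset Strict Implicit.
Variables (d : measure_display) (X : measurableType d) (R : realType).
Variable mu : set X -> \bar R.

Lemma null_set0 : null_set mu set0.
Proof. by split => // E _; rewrite setU0. Qed.

Hypothesis mu_mono : monotone_measure mu.

Lemma null_setS (N M : set X) :
  null_set mu N -> measurable M -> M `<=` N -> null_set mu M.
Proof.
move=> [mN muN] mM MN; case: mu_mono => _ le_mu _ _.
split => // E mE; apply/le_anti/andP; split.
  rewrite -(muN E mE); apply: le_mu; [exact: measurableU..|].
  exact: setUS.
by apply: le_mu; [| exact: measurableU | exact: subsetUl].
Qed.

Hypothesis mu_cont : cont_from_below mu.

Lemma null_set_bigcup_nondecreasing (N : nat -> set X) :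
  (forall n, null_set mu (N n)) -> nondecreasing_seq N ->
  null_set mu (\bigcup_n N n).
Proof.
move=> nullN ndN; have mN n : measurable (N n) by case: (nullN n).
split => [|E mE]; first exact: bigcupT_measurable.
have ndEN : nondecreasing_seq (fun n => E `|` N n).
  by move=> m n mn; apply/subsetPset/setUS/subsetPset/ndN.
rewrite -bigcupUr; last by exists 0%N.
rewrite mu_cont; [|by move=> n; exact: measurableU|exact: ndEN].
have -> : (fun n => mu (E `|` N n)) = (fun=> mu E).
  by apply: funext => n; case: (nullN n) => _ ->.
exact: lim_cst.
Qed.

End null_sets.

Section essential_infimum.
Set Implicit Arguments. Unset Strict Implicit.
Variables (d : measure_display) (X : measurableType d) (R : realType).
Variables (mu : set X -> \bar R) (f : X -> R) (mf : measurable_fun setT f).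

Lemma A_ess_superlevel (a : R) :
  0 <= a -> (a%:E <= A_ess mu f [set x | (a <= f x)%R])%E.
Proof.
move=> a0; rewrite /A_ess; case: ifP => _; first exact: leey.
apply: ereal_sup_ubound; exists a => //; split => //.
rewrite (_ : [set x | _] = set0); first exact: null_set0.
by apply/seteqP; split => x // [/= afx]; rewrite ltNge afx.
Qed.

Hypothesis mu_mono : monotone_measure mu.

Lemma A_ess_gt_null (E : set X) (a : R) : measurable E ->
  (a%:E < A_ess mu f E)%E -> null_set mu [set x | E x /\ f x < a].
Proof.
move=> mE; rewrite /A_ess; have [->|E0] := eqVneq E set0.
  move=> _; rewrite (_ : [set x | _] = set0); first exact: null_set0.
  by apply/seteqP; split => x // [].
move=> /ereal_sup_gt[_ [b [_ nullb] <-]]; rewrite lte_fin => ab.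
apply: null_setS nullb _ _ => //; first exact/measurableI/measurable_lt_level.
by move=> x [Ex fxa]; split => //; exact: lt_trans ab.
Qed.

Hypothesis mu_cont : cont_from_below mu.

Lemma A_ess_ge_null (E : set X) (a : R) : measurable E ->
  (a%:E <= A_ess mu f E)%E -> null_set mu [set x | E x /\ f x < a].
Proof.
move=> mE aA; pose N n := [set x | E x /\ f x < a - n.+1%:R^-1].
have -> : [set x | E x /\ f x < a] = \bigcup_n N n.
  apply/seteqP; split => [x [Ex fxa]|x [n _ [Ex fxa]]].
    have [n fxn] := ltr_add_invr fxa.
    by exists n => //; split => //; rewrite ltrBrDr.
  by split => //; apply: (lt_trans fxa); rewrite ltrBlDr ltrDl invr_gt0.
apply: null_set_bigcup_nondecreasing => // [n|m n mn].
  apply: A_ess_gt_null => //; apply: lt_le_trans aA.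
  by rewrite lte_fin ltrBlDr ltrDl invr_gt0.
apply/subsetPset => x [Ex fxm]; split => //; apply: (lt_le_trans fxm).
by rewrite lerD2l lerN2 lef_pV2 ?posrE // ler_nat ltnS.
Qed.

End essential_infimum.

Theorem proposition3p20 (d : measure_display) (X : measurableType d)
  (R : realType) (mu : R -> set X -> \bar R)
  (hmono : forall t : R, 0 <= t -> monotone_measure (mu t))
  (hcont : forall t : R, 0 < t -> cont_from_below (mu t))
  (t : R) (ht : 0 < t) (f : X -> R)
  (fmeas : measurable_fun setT f)
  (fge0 : forall x, 0 <= f x)
  (fbd : exists M : R, forall x, f x <= M)
  (fneq0 : f <> (fun _ => 0)) :
  ereal_sup [set mu t E | E in
     [set E : set X | measurable E /\ (t%:E <= A_ess (mu t) f E)%E]]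
  = mu t [set x | t <= f x].
Proof.
have mu_mono := hmono t (ltW ht); have [_ le_mu _ _] := mu_mono.
have mS := measurable_ge_level fmeas t.
apply/le_anti/andP; split; last first.
  apply: ereal_sup_ubound; exists [set x | t <= f x] => //.
  by split => //; exact: A_ess_superlevel (ltW ht).
apply/ereal_supP => _ [E [mE tA] <-].
have [mN nullN] := A_ess_ge_null fmeas mu_mono (hcont t ht) mE tA.
rewrite -(nullN _ mS); apply: le_mu => //; first exact: measurableU.
by move=> x Ex; have [tfx|fxt] := leP t (f x); [left | right].
Qed.
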